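(* The function $$G:\lambda_{Lag}\mapsto\int_0^\infty e^{-\lambda s}\left(U\Big((U')^{-1}\big(\tfrac{1}{\lambda_{Lag}}e^{(\lambda-\delta)s}\big)\Big)-h\Big(\big(\tfrac{h'}{\varphi'}\big)^{-1}\big(\tfrac{1}{\lambda_{Lag}}e^{(\lambda-\delta)s}\big)\vee 0\Big)\right)ds$$ is increasing on $(0,\infty)$.
   Context: Standing assumptions: $\varphi:[0,\infty)\to[0,\infty)$ is $C^2$, strictly concave, bounded, increasing, $\varphi(0)=0$, $\varphi'(0)>0$; $U:[0,\infty)\to[0,\infty)$ is $C^2$, strictly concave, increasing, $U(0)=0$, $\lim_{x\to\infty}U'(x)=0$, $\lim_{x\to0}U'(x)=\infty$; $h:[0,\infty)\to[0,\infty)$ is $C^2$, strictly convex, increasing, $h(0)=0$, $h'(0)>0$; $\lambda\ge\delta>0$ are constants. The notation $(h'/\varphi')^{-1}(y)\vee0$ means the inverse of the increasing function $h'/\varphi'$ at $y$ when defined and nonnegative, and $0$ otherwise. *)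

From Stdlib Require Import Reals Lra ClassicalEpsilon.
From Coquelicot Require Import Coquelicot.
Open Scope R_scope.

(* Generalized inverse: the (unique, under strict monotonicity) x with P x and
   f x = y, if such an x exists; 0 otherwise. *)
Definition inv_on (P : R -> Prop) (f : R -> R) (y : R) : R :=
  match excluded_middle_informative (exists x, P x /\ f x = y) with
  | left H => proj1_sig (constructive_indefinite_description _ H)
  | right _ => 0
  end.

Definition inv_dU (dU : R -> R) (y : R) : R := inv_on (fun x => 0 < x) dU y.

(* (h'/phi')^{-1}(y) \/ 0 : the inverse of h'/phi' (defined on [0,oo)) at y
   when it is defined (and then it is nonnegative), and 0 otherwise. *)
Definition inv_hphi (dh dphi : R -> R) (y : R) : R :=
  inv_on (fun x => 0 <= x) (fun x => dh x / dphi x) y.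

Definition C2_on_nonneg (f df d2f : R -> R) : Prop :=
  (forall x, 0 < x -> is_derive f x (df x)) /\
  (forall x, 0 < x -> is_derive df x (d2f x)) /\
  (forall x, 0 < x -> continuous d2f x) /\
  filterlim f (at_right 0) (locally (f 0)) /\
  filterlim df (at_right 0) (locally (df 0)) /\
  filterlim d2f (at_right 0) (locally (d2f 0)).

(* f is continuous on [0,oo) and C^2 on (0,oo) (used for U, whose derivative
   blows up at 0). *)
Definition C2_on_pos_cont0 (f df d2f : R -> R) : Prop :=
  (forall x, 0 < x -> is_derive f x (df x)) /\
  (forall x, 0 < x -> is_derive df x (d2f x)) /\
  (forall x, 0 < x -> continuous d2f x) /\
  filterlim f (at_right 0) (locally (f 0)).

Definition strictly_concave_nonneg (f : R -> R) : Prop :=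
  forall x y t, 0 <= x -> 0 <= y -> x <> y -> 0 < t < 1 ->
    t * f x + (1 - t) * f y < f (t * x + (1 - t) * y).

Definition strictly_convex_nonneg (f : R -> R) : Prop :=
  forall x y t, 0 <= x -> 0 <= y -> x <> y -> 0 < t < 1 ->
    f (t * x + (1 - t) * y) < t * f x + (1 - t) * f y.

Definition increasing_nonneg (f : R -> R) : Prop :=
  forall x y, 0 <= x -> x < y -> f x < f y.

Definition nonneg_valued (f : R -> R) : Prop :=
  forall x, 0 <= x -> 0 <= f x.

Definition G (lam del : R) (U dU h dh dphi : R -> R) (lamLag : R) : R :=
  RInt_gen
    (fun s => exp (- lam * s) *
       (U (inv_dU dU (/ lamLag * exp ((lam - del) * s)))
        - h (inv_hphi dh dphi (/ lamLag * exp ((lam - del) * s)))))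
    (at_point 0) (Rbar_locally p_infty).

(* Write y(s) = e^((lam - del) s) / lamLag; the integrand of G is e^(-lam s) Phi(y(s))
   with Phi y = U((U')^-1 y) - h((h'/phi')^-1 y \/ 0).  Phi is strictly decreasing on
   (0,oo), since (U')^-1 decreases and U increases while (h'/phi')^-1 \/ 0 is
   nondecreasing and h increases.  A larger lamLag makes y(s) smaller, hence the
   integrand strictly larger at every s.  The improper integrals exist because Phi is
   continuous, bounded above, and bounded below by a linear function: the tangent
   inequalities of h and phi at 0 give h((h'/phi')^-1 y) <= h 0 + y (sup phi - phi 0),
   so the integrand is O(e^(-del s)). *)

From Stdlib Require Import Reals Lra ClassicalEpsilon.
From Coquelicot Require Import Coquelicot.
Open Scope R_scope.

Lemma exp_le_exp (x y : R) : x <= y -> exp x <= exp y.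
Proof.
  intros [Hlt | ->]; [now left; apply exp_increasing | apply Rle_refl].
Qed.

Lemma derive_on_continuous (f df : R -> R) :
  (forall x, 0 < x -> is_derive f x (df x)) -> forall x, 0 < x -> continuous f x.
Proof. intros Hd x Hx; apply (ex_derive_continuous f); exists (df x); auto. Qed.

Lemma at_right_witness (P : R -> Prop) : at_right 0 P -> exists x, 0 < x /\ P x.
Proof.
  intros [d Hd]; exists (d / 2).
  assert (0 < d) by apply cond_pos.
  split; [lra |]; apply Hd; [| lra].
  change (Rabs (d / 2 - 0) < d); rewrite Rminus_0_r, Rabs_pos_eq; lra.
Qed.

Lemma IVT_segment (f : R -> R) (a b y : R) : a <= b ->
  (forall x, a <= x <= b -> continuous f x) ->
  f a <= y <= f b \/ f b <= y <= f a -> exists x, a <= x <= b /\ f x = y.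
Proof.
  intros Hab Hf Hy.
  destruct (C0_extension_le f a b Hf) as [g [Hg Hgf]].
  destruct (IVT_gen_consistent g a b y Hg) as [x [Hx Hgx]].
  - rewrite !Hgf by lra.
    unfold Rmin, Rmax; destruct Rle_dec; lra.
  - rewrite Rmin_left, Rmax_right in Hx by lra.
    exists x; split; [exact Hx | now rewrite <- Hgf].
Qed.

Lemma right_limit_lt (f : R -> R) (l : R) :
  (forall x x', 0 < x -> x < x' -> f x < f x') ->
  filterlim f (at_right 0) (locally l) -> forall x, 0 < x -> l < f x.
Proof.
  intros Hf Hl x Hx.
  assert (Hle : Rbar_le l (f (x / 2))).
  { apply (filterlim_le (F := at_right 0) f (fun _ => f (x / 2)));
      [| exact Hl | apply filterlim_const].
    exists (mkposreal (x / 2) ltac:(lra)); intros w Hw Hw0.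
    change (Rabs (w - 0) < x / 2) in Hw; rewrite Rminus_0_r, Rabs_pos_eq in Hw by lra.
    left; apply Hf; lra. }
  simpl in Hle; assert (f (x / 2) < f x) by (apply Hf; lra); lra.
Qed.

Lemma continuous_monotone_squeeze (k : R -> R) (a : Rbar) (y0 : R) :
  Rbar_lt a y0 ->
  (forall y y' : R, Rbar_lt a y -> y <= y' -> k y <= k y') ->
  (forall e, 0 < e -> exists y1 : R, Rbar_lt a y1 /\ y1 < y0 /\ k y0 - e < k y1) ->
  (forall e, 0 < e -> exists y2, y0 < y2 /\ k y2 < k y0 + e) ->
  continuous k y0.
Proof.
  intros Ha Hk Hleft Hright; apply filterlim_locally; intros [e He].
  destruct (Hleft e He) as (y1 & Hay1 & Hy1 & Hk1).
  destruct (Hright e He) as (y2 & Hy2 & Hk2).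
  apply (locally_interval _ y0 y1 y2); [exact Hy1 | exact Hy2 |].
  intros y H1 H2; simpl in H1, H2; change (Rabs (k y - k y0) < e).
  assert (Hay : Rbar_lt a y) by (apply Rbar_lt_trans with y1; auto).
  assert (k y1 <= k y) by (apply Hk; auto; lra).
  assert (k y <= k y2) by (apply Hk; auto; lra).
  apply Rabs_def1; lra.
Qed.

Lemma continuous_comp_at_right (k g : R -> R) (y0 : R) :
  (forall y, 0 <= k y) -> k y0 = 0 -> continuous k y0 ->
  filterlim g (at_right 0) (locally (g 0)) -> continuous (fun y => g (k y)) y0.
Proof.
  intros Hk Hk0 Hc Hg P HP; rewrite Hk0 in HP.
  destruct (Hg P HP) as [d Hd].
  assert (Hnear : locally y0 (fun y => ball 0 d (k y))).
  { apply Hc; rewrite Hk0; apply locally_ball. }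
  change (locally y0 (fun y => P (g (k y)))).
  apply (filter_imp (fun y => ball 0 d (k y))); [intros y Hy | exact Hnear].
  destruct (Rle_lt_or_eq_dec _ _ (Hk y)) as [Hpos | Hzero].
  - now apply Hd.
  - rewrite <- Hzero; now apply locally_singleton.
Qed.

Lemma convex_tangent_le (f : R -> R) (x d y : R) : strictly_convex_nonneg f -> 0 < x ->
  is_derive f x d -> 0 <= y -> f x + d * (y - x) <= f y.
Proof.
  intros Hf Hx Hd Hy; apply Rnot_lt_le; intros Hlt.
  (* The difference quotients of f along the chord from x to y stay below
     f y - f x by convexity, yet they tend to d (y - x). *)
  set (e := f x + d * (y - x) - f y).
  assert (Hyx : y <> x) by (intros ->; unfold e in Hlt; lra).
  assert (Hseg : is_derive (fun t => f (x + t * (y - x))) 0 ((y - x) * d)).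
  { apply (is_derive_comp f (fun t => x + t * (y - x))).
    - now rewrite Rmult_0_l, Rplus_0_r.
    - auto_derive; [easy | ring]. }
  apply is_derive_Reals in Hseg.
  destruct (Hseg e ltac:(unfold e; lra)) as [dl Hdl].
  assert (Hdl0 := cond_pos dl).
  set (t := Rmin (dl / 2) (1 / 2)).
  assert (Ht : 0 < t <= 1 / 2) by (split; [apply Rmin_glb_lt; lra | apply Rmin_r]).
  assert (Htdl : t < dl) by (assert (t <= dl / 2) by apply Rmin_l; lra).
  specialize (Hdl t ltac:(lra) ltac:(rewrite Rabs_pos_eq; lra)).
  rewrite Rplus_0_l, Rmult_0_l, Rplus_0_r in Hdl.
  assert (Hchord : f (x + t * (y - x)) < t * f y + (1 - t) * f x).
  { replace (x + t * (y - x)) with (t * y + (1 - t) * x) by ring.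
    apply Hf; auto; lra. }
  apply Rabs_def2 in Hdl; destruct Hdl as [_ Hdl].
  assert (Hq : (f (x + t * (y - x)) - f x) / t < f y - f x).
  { apply Rmult_lt_reg_r with t; [lra |].
    unfold Rdiv; rewrite Rmult_assoc, Rinv_l, Rmult_1_r; lra. }
  unfold e in Hdl; lra.
Qed.

Lemma convex_tangent_lt (f : R -> R) (x d y : R) : strictly_convex_nonneg f -> 0 < x ->
  is_derive f x d -> 0 <= y -> y <> x -> f x + d * (y - x) < f y.
Proof.
  intros Hf Hx Hd Hy Hyx.
  assert (Hmid := convex_tangent_le f x d ((x + y) / 2) Hf Hx Hd ltac:(lra)).
  assert (Hchord : f (/ 2 * x + (1 - / 2) * y) < / 2 * f x + (1 - / 2) * f y)
    by (apply Hf; auto; lra).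
  replace (/ 2 * x + (1 - / 2) * y) with ((x + y) / 2) in Hchord by field.
  lra.
Qed.

Lemma convex_derive_lt (f : R -> R) (x x' d d' : R) : strictly_convex_nonneg f -> 0 < x -> x < x' ->
  is_derive f x d -> is_derive f x' d' -> d < d'.
Proof.
  intros Hf Hx Hxx' Hd Hd'.
  assert (H1 := convex_tangent_lt f x d x' Hf Hx Hd ltac:(lra) ltac:(lra)).
  assert (H2 := convex_tangent_lt f x' d' x Hf ltac:(lra) Hd' ltac:(lra) ltac:(lra)).
  nra.
Qed.

Lemma concave_opp_convex (f : R -> R) :
  strictly_concave_nonneg f -> strictly_convex_nonneg (fun x => - f x).
Proof. intros Hf x y t Hx Hy Hxy Ht; specialize (Hf x y t Hx Hy Hxy Ht); lra. Qed.

Lemma concave_tangent_le (f : R -> R) (x d y : R) : strictly_concave_nonneg f -> 0 < x ->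
  is_derive f x d -> 0 <= y -> f y <= f x + d * (y - x).
Proof.
  intros Hf Hx Hd Hy.
  assert (H := convex_tangent_le _ x (- d) y (concave_opp_convex f Hf) Hx
                 (is_derive_opp f x d Hd) Hy).
  simpl in H; lra.
Qed.

Lemma concave_derive_lt (f : R -> R) (x x' d d' : R) : strictly_concave_nonneg f ->
  0 < x -> x < x' -> is_derive f x d -> is_derive f x' d' -> d' < d.
Proof.
  intros Hf Hx Hxx' Hd Hd'.
  assert (H := convex_derive_lt _ x x' (- d) (- d') (concave_opp_convex f Hf) Hx Hxx'
                 (is_derive_opp f x d Hd) (is_derive_opp f x' d' Hd')).
  lra.
Qed.

Lemma concave_increasing_derive_pos (f : R -> R) (x d : R) : strictly_concave_nonneg f ->
  increasing_nonneg f -> 0 < x -> is_derive f x d -> 0 < d.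
Proof.
  intros Hf Hinc Hx Hd.
  assert (H1 := concave_tangent_le f x d (x + 1) Hf Hx Hd ltac:(lra)).
  assert (H2 := Hinc x (x + 1) ltac:(lra) ltac:(lra)).
  lra.
Qed.

Lemma inv_on_spec (P : R -> Prop) (f : R -> R) (y : R) :
  (exists x, P x /\ f x = y) -> P (inv_on P f y) /\ f (inv_on P f y) = y.
Proof.
  intros H; unfold inv_on; destruct excluded_middle_informative as [H' | H'].
  - exact (proj2_sig (constructive_indefinite_description _ H')).
  - contradiction.
Qed.

Lemma inv_on_default (P : R -> Prop) (f : R -> R) (y : R) :
  ~ (exists x, P x /\ f x = y) -> inv_on P f y = 0.
Proof.
  intros H; unfold inv_on; destruct excluded_middle_informative; [contradiction | easy].
Qed.

Lemma inv_on_cancel (P : R -> Prop) (f : R -> R) (x : R) :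
  (forall x x', P x -> P x' -> f x = f x' -> x = x') -> P x -> inv_on P f (f x) = x.
Proof.
  intros Hinj Hx.
  destruct (inv_on_spec P f (f x)) as [H1 H2]; [now exists x |].
  now apply Hinj.
Qed.

Section MarginalUtilityInverse.

Variables U dU : R -> R.
Hypothesis U_derive : forall x, 0 < x -> is_derive U x (dU x).
Hypothesis dU_cont : forall x, 0 < x -> continuous dU x.
Hypothesis U_concave : strictly_concave_nonneg U.
Hypothesis U_incr : increasing_nonneg U.
Hypothesis dU_at_infty : filterlim dU (Rbar_locally p_infty) (locally 0).
Hypothesis dU_at_0 : filterlim dU (at_right 0) (Rbar_locally p_infty).

Lemma dU_pos x : 0 < x -> 0 < dU x.
Proof.
  intros Hx; exact (concave_increasing_derive_pos U x _ U_concave U_incr Hx (U_derive x Hx)).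
Qed.

Lemma dU_decr x x' : 0 < x -> x < x' -> dU x' < dU x.
Proof. intros Hx Hxx'; apply (concave_derive_lt U x x'); auto; apply U_derive; lra. Qed.

Lemma dU_surj y : 0 < y -> exists x, 0 < x /\ dU x = y.
Proof.
  intros Hy.
  destruct (at_right_witness (fun x => y < dU x)) as [a [Ha Hya]].
  { apply dU_at_0; now exists y. }
  destruct (dU_at_infty (fun z => Rabs (z - 0) < y)) as [M HM].
  { now exists (mkposreal y Hy). }
  set (b := Rmax M a + 1).
  assert (Hab : a < b) by (assert (a <= Rmax M a) by apply Rmax_r; unfold b; lra).
  assert (Hyb : dU b < y).
  { assert (HMb := HM b ltac:(assert (M <= Rmax M a) by apply Rmax_l; unfold b; lra)).
    rewrite Rminus_0_r in HMb; apply Rabs_def2 in HMb; lra. }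
  destruct (IVT_segment dU a b y) as [x [Hx Hdx]]; [lra | | lra |].
  - intros x Hx; apply dU_cont; lra.
  - exists x; split; [lra | exact Hdx].
Qed.

Lemma inv_dU_spec y : 0 < y -> 0 < inv_dU dU y /\ dU (inv_dU dU y) = y.
Proof. intros Hy; apply inv_on_spec, dU_surj, Hy. Qed.

Lemma inv_dU_cancel x : 0 < x -> inv_dU dU (dU x) = x.
Proof.
  apply inv_on_cancel; intros z z' Hz Hz' Heq.
  destruct (Rtotal_order z z') as [Hlt | [Hzz' | Hlt]]; auto.
  - assert (dU z' < dU z) by (apply dU_decr; auto); lra.
  - assert (dU z < dU z') by (apply dU_decr; auto); lra.
Qed.

Lemma inv_dU_decr y y' : 0 < y -> y < y' -> inv_dU dU y' < inv_dU dU y.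
Proof.
  intros Hy Hyy'.
  destruct (inv_dU_spec y Hy) as [Hx Hdx], (inv_dU_spec y' ltac:(lra)) as [Hx' Hdx'].
  destruct (Rlt_le_dec (inv_dU dU y') (inv_dU dU y)) as [| Hle]; auto.
  destruct (Rle_lt_or_eq_dec _ _ Hle) as [Hlt | Heq].
  - assert (dU (inv_dU dU y') < dU (inv_dU dU y)) by (apply dU_decr; auto); lra.
  - rewrite <- Heq in Hdx'; lra.
Qed.

Lemma inv_dU_continuous y : 0 < y -> continuous (inv_dU dU) y.
Proof.
  intros Hy; destruct (inv_dU_spec y Hy) as [Hx Hdx].
  apply continuous_ext with (fun z => - - inv_dU dU z); [intros; apply Ropp_involutive |].
  apply (continuous_opp (fun z => - inv_dU dU z)).
  apply (continuous_monotone_squeeze _ 0); [exact Hy | | |].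
  - intros z z' Hz Hzz'; simpl in Hz; apply Ropp_le_contravar.
    destruct (Rle_lt_or_eq_dec _ _ Hzz') as [Hlt | ->]; [left; now apply inv_dU_decr | lra].
  - intros e He; exists (dU (inv_dU dU y + e / 2)); rewrite inv_dU_cancel by lra.
    assert (dU (inv_dU dU y + e / 2) < dU (inv_dU dU y)) by (apply dU_decr; lra).
    assert (0 < dU (inv_dU dU y + e / 2)) by (apply dU_pos; lra).
    simpl; repeat split; lra.
  - intros e He; set (b := Rmin (e / 2) (inv_dU dU y / 2)).
    assert (Hb : 0 < b /\ b <= e / 2 /\ b <= inv_dU dU y / 2)
      by (repeat split; [apply Rmin_glb_lt; lra | apply Rmin_l | apply Rmin_r]).
    exists (dU (inv_dU dU y - b)); rewrite inv_dU_cancel by lra.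
    assert (dU (inv_dU dU y) < dU (inv_dU dU y - b)) by (apply dU_decr; lra).
    split; lra.
Qed.

Lemma U_inv_dU_continuous y : 0 < y -> continuous (fun z => U (inv_dU dU z)) y.
Proof.
  intros Hy; apply (continuous_comp (inv_dU dU) U); [now apply inv_dU_continuous |].
  apply (ex_derive_continuous U); exists (dU (inv_dU dU y)); apply U_derive, inv_dU_spec, Hy.
Qed.

Lemma U_inv_dU_decr y y' : 0 < y -> y < y' -> U (inv_dU dU y') < U (inv_dU dU y).
Proof.
  intros Hy Hyy'; apply U_incr; [| now apply inv_dU_decr].
  left; apply inv_dU_spec; lra.
Qed.

Lemma U_inv_dU_bounds y0 y : 0 < y0 -> y0 <= y -> U 0 < U (inv_dU dU y) <= U (inv_dU dU y0).
Proof.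
  intros Hy0 Hy; split.
  - apply U_incr; [lra | apply inv_dU_spec; lra].
  - destruct Hy as [Hlt | ->]; [left; now apply U_inv_dU_decr | lra].
Qed.

End MarginalUtilityInverse.

Section MarginalRatioInverse.

Variables phi dphi h dh : R -> R.
Hypothesis phi_derive : forall x, 0 < x -> is_derive phi x (dphi x).
Hypothesis dphi_cont : forall x, 0 < x -> continuous dphi x.
Hypothesis dphi_at_0 : filterlim dphi (at_right 0) (locally (dphi 0)).
Hypothesis phi_concave : strictly_concave_nonneg phi.
Hypothesis phi_incr : increasing_nonneg phi.
Hypothesis phi_bounded : exists M, forall x, 0 <= x -> phi x <= M.
Hypothesis dphi0_pos : 0 < dphi 0.
Hypothesis h_derive : forall x, 0 < x -> is_derive h x (dh x).
Hypothesis h_at_0 : filterlim h (at_right 0) (locally (h 0)).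
Hypothesis dh_cont : forall x, 0 < x -> continuous dh x.
Hypothesis dh_at_0 : filterlim dh (at_right 0) (locally (dh 0)).
Hypothesis h_convex : strictly_convex_nonneg h.
Hypothesis h_incr : increasing_nonneg h.
Hypothesis dh0_pos : 0 < dh 0.

Let r x := dh x / dphi x.
Let eta := inv_hphi dh dphi.

Lemma dphi_pos x : 0 <= x -> 0 < dphi x.
Proof.
  intros [Hx | <-]; [| exact dphi0_pos].
  exact (concave_increasing_derive_pos phi x _ phi_concave phi_incr Hx (phi_derive x Hx)).
Qed.

Lemma dphi_decr x x' : 0 <= x -> x < x' -> dphi x' < dphi x.
Proof.
  assert (Hdecr : forall z z', 0 < z -> z < z' -> dphi z' < dphi z)
    by (intros z z' Hz Hzz'; apply (concave_derive_lt phi z z'); auto; apply phi_derive; lra).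
  intros [Hx | <-] Hxx'; [now apply Hdecr |].
  assert (H := right_limit_lt (fun z => - dphi z) (- dphi 0)).
  enough (- dphi 0 < - dphi x') by lra.
  apply H; [intros z z' Hz Hzz'; apply Ropp_lt_contravar, Hdecr; auto | | exact Hxx'].
  eapply filterlim_comp; [exact dphi_at_0 | apply (filterlim_opp (dphi 0))].
Qed.

Lemma dh_incr x x' : 0 <= x -> x < x' -> dh x < dh x'.
Proof.
  assert (Hincr : forall z z', 0 < z -> z < z' -> dh z < dh z')
    by (intros z z' Hz Hzz'; apply (convex_derive_lt h z z'); auto; apply h_derive; lra).
  intros [Hx | <-] Hxx'; [now apply Hincr |].
  exact (right_limit_lt dh (dh 0) Hincr dh_at_0 x' Hxx').
Qed.

Lemma dh_pos x : 0 <= x -> 0 < dh x.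
Proof. intros [Hx | <-]; [apply Rlt_trans with (dh 0); [| apply dh_incr] |]; auto; lra. Qed.

Lemma hphi_incr x x' : 0 <= x -> x < x' -> r x < r x'.
Proof.
  intros Hx Hxx'; unfold r, Rdiv.
  assert (Hp := dphi_pos x Hx); assert (Hp' := dphi_pos x' ltac:(lra)).
  apply Rlt_trans with (dh x' * / dphi x).
  - apply Rmult_lt_compat_r; [now apply Rinv_0_lt_compat | now apply dh_incr].
  - apply Rmult_lt_compat_l; [apply dh_pos; lra |].
    apply Rinv_lt_contravar; [now apply Rmult_lt_0_compat | now apply dphi_decr].
Qed.

Lemma hphi_continuous x : 0 < x -> continuous r x.
Proof.
  intros Hx; apply continuity_pt_filterlim, continuity_pt_div.
  - now apply continuity_pt_filterlim, dh_cont.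
  - now apply continuity_pt_filterlim, dphi_cont.
  - apply Rgt_not_eq, dphi_pos; lra.
Qed.

Lemma hphi_at_0 : filterlim r (at_right 0) (locally (r 0)).
Proof.
  apply (filterlim_comp_2 (H := locally (/ dphi 0)) dh (fun x => / dphi x) Rmult dh_at_0).
  - eapply filterlim_comp; [exact dphi_at_0 |].
    apply (filterlim_Rbar_inv (dphi 0)); intros Heq; injection Heq; lra.
  - apply (filterlim_mult (K := R_AbsRing)).
Qed.

Lemma mul_dphi_bounded : exists K, 0 < K /\ forall x, 0 < x -> x * dphi x <= K.
Proof.
  destruct phi_bounded as [M HM]; exists (M - phi 0); split.
  - assert (phi 0 < phi 1) by (apply phi_incr; lra).
    assert (phi 1 <= M) by (apply HM; lra); lra.
  - intros x Hx.
    assert (H := concave_tangent_le phi x (dphi x) 0 phi_concave Hx (phi_derive x Hx) ltac:(lra)).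
    assert (phi x <= M) by (apply HM; lra); lra.
Qed.

Lemma hphi_unbounded y : exists x, 0 < x /\ y < r x.
Proof.
  destruct mul_dphi_bounded as [K [HK Hgap]].
  set (x := (Rabs y + 1) * K / dh 0).
  assert (Hy0 := Rabs_pos y).
  assert (Hx : 0 < x) by (apply Rdiv_lt_0_compat; [apply Rmult_lt_0_compat |]; lra).
  assert (Hxdh : x * dh 0 = (Rabs y + 1) * K) by (unfold x; field; lra).
  assert (Hdx := Hgap x Hx); assert (Hp := dphi_pos x ltac:(lra)).
  assert (Hdh := dh_incr 0 x ltac:(lra) Hx).
  assert (Hy := Rle_abs y).
  assert (Hkey : (Rabs y + 1) * dphi x <= dh 0) by nra.
  exists x; split; [exact Hx |]; apply Rlt_div_r; [exact Hp | nra].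
Qed.

Lemma hphi_surj y : r 0 <= y -> exists x, 0 <= x /\ r x = y.
Proof.
  intros [Hy | <-]; [| exists 0; split; [lra | easy]].
  destruct (at_right_witness (fun x => r x < y)) as [a [Ha Hay]].
  { apply (hphi_at_0 (fun z => z < y)).
    exists (mkposreal (y - r 0) ltac:(lra)); intros z Hz.
    change (Rabs (z - r 0) < y - r 0) in Hz; apply Rabs_def2 in Hz; lra. }
  destruct (hphi_unbounded y) as [b [Hb Hyb]].
  assert (Hab : a < b).
  { destruct (Rlt_le_dec a b) as [| [Hba | ->]]; [easy | | lra].
    assert (r b < r a) by (apply hphi_incr; lra); lra. }
  destruct (IVT_segment r a b y) as [x [Hx Hrx]]; [lra | | lra |].
  - intros x Hx; apply hphi_continuous; lra.
  - exists x; split; [lra | exact Hrx].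
Qed.

Lemma hphi_inj x x' : 0 <= x -> 0 <= x' -> r x = r x' -> x = x'.
Proof.
  intros Hx Hx' Heq; destruct (Rtotal_order x x') as [Hlt | [| Hlt]]; auto.
  - assert (r x < r x') by (now apply hphi_incr); lra.
  - assert (r x' < r x) by (now apply hphi_incr); lra.
Qed.

Lemma inv_hphi_nonneg y : 0 <= eta y.
Proof.
  unfold eta, inv_hphi.
  destruct (classic (exists x, 0 <= x /\ r x = y)) as [Hex | Hno].
  - exact (proj1 (inv_on_spec _ r y Hex)).
  - rewrite inv_on_default by exact Hno; lra.
Qed.

Lemma hphi_inv_hphi y : r 0 <= y -> r (eta y) = y.
Proof. intros Hy; apply (inv_on_spec (fun x => 0 <= x) r), hphi_surj, Hy. Qed.

Lemma inv_hphi_below y : y < r 0 -> eta y = 0.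
Proof.
  intros Hy; apply inv_on_default; intros [x [Hx Hrx]]; change (r x = y) in Hrx.
  destruct Hx as [Hx | <-]; [| lra].
  assert (r 0 < r x) by (apply hphi_incr; lra); lra.
Qed.

Lemma inv_hphi_hphi x : 0 <= x -> eta (r x) = x.
Proof. apply (inv_on_cancel (fun x => 0 <= x) r), hphi_inj. Qed.

Lemma le_hphi_inv_hphi y : y <= r (eta y).
Proof.
  destruct (Rlt_le_dec y (r 0)) as [Hy | Hy].
  - rewrite inv_hphi_below; lra.
  - rewrite hphi_inv_hphi; lra.
Qed.

Lemma hphi_inv_hphi_pos y : 0 < eta y -> r (eta y) = y.
Proof.
  intros Hpos; apply hphi_inv_hphi.
  destruct (Rlt_le_dec y (r 0)) as [Hy | Hy]; [rewrite inv_hphi_below in Hpos |]; lra.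
Qed.

Lemma inv_hphi_nondecr y y' : y <= y' -> eta y <= eta y'.
Proof.
  intros Hyy'; apply Rnot_lt_le; intros Hlt.
  assert (Hpos : 0 < eta y) by (assert (H := inv_hphi_nonneg y'); lra).
  assert (Hr : r (eta y') < r (eta y)) by (apply hphi_incr; [apply inv_hphi_nonneg | exact Hlt]).
  assert (H := le_hphi_inv_hphi y'); rewrite (hphi_inv_hphi_pos y Hpos) in Hr; lra.
Qed.

Lemma inv_hphi_continuous y : continuous eta y.
Proof.
  assert (Hnn := inv_hphi_nonneg y).
  apply (continuous_monotone_squeeze _ m_infty); [easy | intros; now apply inv_hphi_nondecr | |].
  - intros e He; destruct (Rlt_le_dec (eta y) e) as [Hsmall | Hlarge].
    + exists (y - 1); assert (Hnn' := inv_hphi_nonneg (y - 1)); simpl; repeat split; lra.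
    + exists (r (eta y - e / 2)); rewrite inv_hphi_hphi by lra.
      assert (Hr : r (eta y - e / 2) < r (eta y)) by (apply hphi_incr; lra).
      rewrite (hphi_inv_hphi_pos y) in Hr by lra; simpl; repeat split; lra.
  - intros e He; exists (r (eta y + e / 2)); rewrite inv_hphi_hphi by lra.
    assert (Hr : r (eta y) < r (eta y + e / 2)) by (apply hphi_incr; lra).
    assert (Hle := le_hphi_inv_hphi y); split; lra.
Qed.

Lemma h_inv_hphi_continuous y : continuous (fun z => h (eta z)) y.
Proof.
  destruct (inv_hphi_nonneg y) as [Hpos | Hzero].
  - apply (continuous_comp eta h); [apply inv_hphi_continuous |].
    apply (ex_derive_continuous h); exists (dh (eta y)); now apply h_derive.
  - apply continuous_comp_at_right;
      [apply inv_hphi_nonneg | easy | apply inv_hphi_continuous | exact h_at_0].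
Qed.

Lemma h_inv_hphi_nondecr y y' : y <= y' -> h (eta y) <= h (eta y').
Proof.
  intros Hyy'; destruct (inv_hphi_nondecr y y' Hyy') as [Hlt | ->]; [| lra].
  left; apply h_incr; [apply inv_hphi_nonneg | exact Hlt].
Qed.

Lemma h_inv_hphi_linear_bound : exists K, forall y, 0 < y -> h 0 <= h (eta y) <= h 0 + K * y.
Proof.
  destruct mul_dphi_bounded as [K [HK Hgap]]; exists K; intros y Hy.
  destruct (inv_hphi_nonneg y) as [Hpos | Hzero]; [| rewrite <- Hzero; nra].
  split; [left; apply h_incr; lra |].
  assert (Hr := hphi_inv_hphi_pos y Hpos); set (x := eta y) in *; unfold r in Hr.
  assert (Hdh : dh x = y * dphi x) by (rewrite <- Hr; field; apply Rgt_not_eq, dphi_pos; lra).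
  assert (Ht := convex_tangent_le h x (dh x) 0 h_convex Hpos (h_derive x Hpos) ltac:(lra)).
  assert (Hxd := Hgap x Hpos).
  rewrite Hdh in Ht; nra.
Qed.

End MarginalRatioInverse.

Lemma is_RInt_exp_decay (C d a b : R) : 0 < d ->
  is_RInt (fun s => C * exp (- d * s)) a b (C / d * (exp (- d * a) - exp (- d * b))).
Proof.
  intros Hd.
  replace (C / d * (exp (- d * a) - exp (- d * b))) with
    (minus (- C / d * exp (- d * b)) (- C / d * exp (- d * a)))
    by (unfold minus, plus, opp; simpl; field; lra).
  apply (is_RInt_derive (fun s => - C / d * exp (- d * s))).
  - intros x _; auto_derive; [easy | field; lra].
  - intros x _; apply (ex_derive_continuous (fun s => C * exp (- d * s))); auto_derive; easy.
Qed.

Lemma exp_decay_small (d t : R) : 0 < d -> 0 < t -> exists N, 0 <= N /\ exp (- d * N) < t.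
Proof.
  intros Hd Ht; exists (Rabs (ln t) / d + 1).
  assert (Habs := Rabs_pos (ln t)); assert (Hln := Rabs_maj2 (ln t)).
  split; [assert (0 <= Rabs (ln t) / d) by (apply Rdiv_le_0_compat; lra); lra |].
  rewrite <- (exp_ln t Ht) at 2; apply exp_increasing.
  replace (- d * (Rabs (ln t) / d + 1)) with (- Rabs (ln t) - d) by (field; lra); lra.
Qed.

Section ExponentiallyDominated.

Variables (f : R -> R) (C d : R).
Hypothesis f_cont : forall s, continuous f s.
Hypothesis d_pos : 0 < d.
Hypothesis f_dominated : forall s, 0 <= s -> Rabs (f s) <= C * exp (- d * s).

Lemma ex_RInt_continuous_R (a b : R) : ex_RInt f a b.
Proof. apply (ex_RInt_continuous (V := R_CompleteNormedModule)); intros; apply f_cont. Qed.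

Lemma dominating_constant_nonneg : 0 <= C.
Proof.
  assert (H := f_dominated 0 (Rle_refl 0)); assert (Hp := exp_pos (- d * 0)).
  assert (Ha := Rabs_pos (f 0)); nra.
Qed.

Lemma RInt_tail_le (N x : R) : 0 <= N -> N <= x -> Rabs (RInt f N x) <= C / d * exp (- d * N).
Proof.
  intros HN Hx; assert (HC := dominating_constant_nonneg).
  eapply Rle_trans; [apply abs_RInt_le; [exact Hx | apply ex_RInt_continuous_R] |].
  eapply Rle_trans; [apply (RInt_le _ (fun s => C * exp (- d * s))); [exact Hx | | | ] |].
  - apply (ex_RInt_continuous (V := R_CompleteNormedModule)); intros z _.
    apply (continuous_comp f Rabs); [apply f_cont | apply continuous_Rabs].
  - eexists; apply is_RInt_exp_decay, d_pos.
  - intros z Hz; apply f_dominated; lra.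
  - rewrite (is_RInt_unique _ _ _ _ (is_RInt_exp_decay C d N x d_pos)).
    assert (0 < exp (- d * x)) by apply exp_pos.
    assert (0 <= C / d) by (apply Rdiv_le_0_compat; lra); nra.
Qed.

Lemma RInt_dominated_cvg :
  exists L, filterlim (fun x => RInt f 0 x) (Rbar_locally p_infty) (locally L).
Proof.
  assert (HC := dominating_constant_nonneg).
  apply (filterlim_locally_cauchy (F := Rbar_locally p_infty)); intros [e He].
  destruct (exp_decay_small d (e * d / (2 * (C + 1)))) as [N [HN HNe]];
    [exact d_pos | apply Rdiv_lt_0_compat; nra |].
  assert (Htail : C / d * exp (- d * N) < e / 2).
  { assert (Hp := exp_pos (- d * N)).
    apply Rle_lt_trans with ((C + 1) / d * exp (- d * N)).
    - apply Rmult_le_compat_r; [lra |].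
      apply Rmult_le_compat_r; [apply Rlt_le, Rinv_0_lt_compat |]; lra.
    - apply Rlt_le_trans with ((C + 1) / d * (e * d / (2 * (C + 1)))).
      + apply Rmult_lt_compat_l; [apply Rdiv_lt_0_compat |]; lra.
      + right; field; lra. }
  exists (fun x => N < x); split; [now exists N |].
  intros u v Hu Hv; change (Rabs (RInt f 0 v - RInt f 0 u) < e).
  assert (Hsplit : forall x, RInt f 0 x = RInt f 0 N + RInt f N x)
    by (intros x; symmetry; apply (RInt_Chasles f 0 N x); apply ex_RInt_continuous_R).
  rewrite (Hsplit u), (Hsplit v).
  assert (Hu' := RInt_tail_le N u HN ltac:(lra)); assert (Hv' := RInt_tail_le N v HN ltac:(lra)).
  assert (Hu1 := Rle_abs (RInt f N u)); assert (Hu2 := Rabs_maj2 (RInt f N u)).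
  assert (Hv1 := Rle_abs (RInt f N v)); assert (Hv2 := Rabs_maj2 (RInt f N v)).
  apply Rabs_def1; lra.
Qed.

End ExponentiallyDominated.

Lemma is_RInt_gen_of_cvg (f : R -> R) (L : R) : (forall x, ex_RInt f 0 x) ->
  filterlim (fun x => RInt f 0 x) (Rbar_locally p_infty) (locally L) ->
  is_RInt_gen f (at_point 0) (Rbar_locally p_infty) L.
Proof.
  intros Hex HL P HP; destruct (HL P HP) as [M HM].
  exists (fun x => x = 0) (fun y => M < y); [reflexivity | now exists M |].
  intros x y -> Hy; exists (RInt f 0 y); split;
    [apply (RInt_correct (V := R_CompleteNormedModule)), Hex | now apply HM].
Qed.

Lemma lim_RInt_lt (fa fb : R -> R) (La Lb : R) :
  (forall s, continuous fa s) -> (forall s, continuous fb s) ->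
  (forall s, 0 <= s -> fa s < fb s) ->
  filterlim (fun x => RInt fa 0 x) (Rbar_locally p_infty) (locally La) ->
  filterlim (fun x => RInt fb 0 x) (Rbar_locally p_infty) (locally Lb) ->
  La < Lb.
Proof.
  intros Hca Hcb Hlt HLa HLb.
  set (g := fun s => fb s - fa s).
  assert (Hcg : forall s, continuous g s) by (intros s; apply (continuous_minus fb fa); auto).
  assert (Hexg : forall a b, ex_RInt g a b)
    by (intros; apply (ex_RInt_continuous (V := R_CompleteNormedModule)); auto).
  assert (Hg : forall s, 0 <= s -> 0 < g s) by (intros s Hs; assert (H := Hlt s Hs); unfold g; lra).
  assert (Hm : 0 < RInt g 0 1) by (apply RInt_gt_0; [lra | intros x Hx; apply Hg; lra | auto]).
  assert (Hdiff : is_lim (fun x => RInt fb 0 x - RInt fa 0 x) p_infty (Lb - La))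
    by exact (is_lim_minus _ _ p_infty Lb La (Lb - La) HLb HLa eq_refl).
  enough (Rbar_le (RInt g 0 1) (Lb - La)) by (simpl in *; lra).
  apply (filterlim_le (F := Rbar_locally p_infty) (fun _ => RInt g 0 1)
           (fun x => RInt fb 0 x - RInt fa 0 x)); [| apply filterlim_const | exact Hdiff].
  exists 1; intros x Hx.
  assert (Heq : RInt fb 0 x - RInt fa 0 x = RInt g 0 x).
  { symmetry; apply (RInt_minus (V := R_CompleteNormedModule));
      apply (ex_RInt_continuous (V := R_CompleteNormedModule)); auto. }
  rewrite Heq, <- (RInt_Chasles g 0 1 x) by apply Hexg.
  assert (0 <= RInt g 1 x)
    by (apply RInt_ge_0; [lra | apply Hexg | intros z Hz; left; apply Hg; lra]).
  unfold plus; simpl; lra.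
Qed.

Section DiscountedValue.

Variables (lam del : R) (Phi : R -> R).
Hypothesis del_pos : 0 < del.
Hypothesis del_le_lam : del <= lam.
Hypothesis Phi_cont : forall y, 0 < y -> continuous Phi y.
Hypothesis Phi_decr : forall y y', 0 < y -> y < y' -> Phi y' < Phi y.
Hypothesis Phi_bounds :
  forall y0, 0 < y0 -> exists A B M, forall y, y0 <= y -> A - M * y <= Phi y <= B.

Let integrand (c s : R) := exp (- lam * s) * Phi (/ c * exp ((lam - del) * s)).

Definition discounted_value (c : R) : R :=
  RInt_gen (integrand c) (at_point 0) (Rbar_locally p_infty).

Lemma integrand_continuous c : 0 < c -> forall s, continuous (integrand c) s.
Proof.
  intros Hc s.
  apply (continuous_mult (fun s => exp (- lam * s))).
  - apply (ex_derive_continuous (fun s => exp (- lam * s))); auto_derive; easy.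
  - apply (continuous_comp (fun s => / c * exp ((lam - del) * s)) Phi).
    + apply (ex_derive_continuous (fun s => / c * exp ((lam - del) * s))); auto_derive; easy.
    + apply Phi_cont, Rmult_lt_0_compat; [now apply Rinv_0_lt_compat | apply exp_pos].
Qed.

Lemma integrand_dominated c : 0 < c ->
  exists C, forall s, 0 <= s -> Rabs (integrand c s) <= C * exp (- del * s).
Proof.
  intros Hc; assert (Hic : 0 < / c) by now apply Rinv_0_lt_compat.
  destruct (Phi_bounds (/ c) Hic) as (A & B & M & HAB).
  set (A' := Rabs A + Rabs B); set (M' := Rabs M).
  assert (HPhi : forall y, / c <= y -> Rabs (Phi y) <= A' + M' * y).
  { intros y Hy; specialize (HAB y Hy).
    assert (M * y <= Rabs M * y) by (apply Rmult_le_compat_r; [lra | apply Rle_abs]).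
    assert (0 <= Rabs M * y) by (apply Rmult_le_pos; [apply Rabs_pos | lra]).
    assert (Ha := Rabs_maj2 A); assert (Ha' := Rabs_pos A).
    assert (Hb := Rle_abs B); assert (Hb' := Rabs_pos B).
    unfold A', M'; apply Rabs_le; split; lra. }
  exists (A' + M' / c); intros s Hs; unfold integrand.
  set (y := / c * exp ((lam - del) * s)).
  assert (Hgrowth : / c <= y).
  { assert (1 <= exp ((lam - del) * s)) by (rewrite <- exp_0; apply exp_le_exp; nra).
    unfold y; nra. }
  assert (Hsplit : exp (- lam * s) * y = / c * exp (- del * s))
    by (unfold y; rewrite Rmult_comm, Rmult_assoc, <- exp_plus; do 2 f_equal; ring).
  assert (Hdisc : exp (- lam * s) <= exp (- del * s)) by (apply exp_le_exp; nra).
  assert (Hpos := exp_pos (- lam * s)).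
  assert (HA' : 0 <= A') by (apply Rplus_le_le_0_compat; apply Rabs_pos).
  rewrite Rabs_mult, (Rabs_pos_eq (exp _)) by lra.
  apply Rle_trans with (exp (- lam * s) * (A' + M' * y)); [apply Rmult_le_compat_l; auto; lra |].
  replace (exp (- lam * s) * (A' + M' * y))
    with (exp (- lam * s) * A' + M' * (exp (- lam * s) * y)) by ring.
  rewrite Hsplit; unfold Rdiv; nra.
Qed.

Lemma integrand_lt c c' s : 0 < c -> c < c' -> integrand c s < integrand c' s.
Proof.
  intros Hc Hcc'; unfold integrand.
  apply Rmult_lt_compat_l; [apply exp_pos |].
  assert (Hp := exp_pos ((lam - del) * s)).
  apply Phi_decr; [apply Rmult_lt_0_compat; [apply Rinv_0_lt_compat |]; lra |].
  apply Rmult_lt_compat_r; [exact Hp | apply Rinv_lt_contravar; nra].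
Qed.

Lemma discounted_value_cvg c : 0 < c ->
  filterlim (fun x => RInt (integrand c) 0 x) (Rbar_locally p_infty) (locally (discounted_value c)).
Proof.
  intros Hc; destruct (integrand_dominated c Hc) as [C HC].
  destruct (RInt_dominated_cvg _ C del (integrand_continuous c Hc) del_pos HC) as [L HL].
  unfold discounted_value; rewrite (is_RInt_gen_unique _ L); [exact HL |].
  apply is_RInt_gen_of_cvg; [| exact HL].
  intros; apply (ex_RInt_continuous_R _ (integrand_continuous c Hc)).
Qed.

Theorem discounted_value_incr c c' : 0 < c -> c < c' -> discounted_value c < discounted_value c'.
Proof.
  intros Hc Hcc'.
  apply (lim_RInt_lt (integrand c) (integrand c')); try apply integrand_continuous; try lra.
  - intros s _; now apply integrand_lt.
  - now apply discounted_value_cvg.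
  - apply discounted_value_cvg; lra.
Qed.

End DiscountedValue.

Theorem lemma3p5
  (phi dphi d2phi U dU d2U h dh d2h : R -> R) (lam del : R)
  (* phi *)
  (Hphi_C2 : C2_on_nonneg phi dphi d2phi)
  (Hphi_conc : strictly_concave_nonneg phi)
  (Hphi_bdd : exists M, forall x, 0 <= x -> phi x <= M)
  (Hphi_incr : increasing_nonneg phi)
  (Hphi_nn : nonneg_valued phi)
  (Hphi0 : phi 0 = 0)
  (Hdphi0 : 0 < dphi 0)
  (* U *)
  (HU_C2 : C2_on_pos_cont0 U dU d2U)
  (HU_conc : strictly_concave_nonneg U)
  (HU_incr : increasing_nonneg U)
  (HU_nn : nonneg_valued U)
  (HU0 : U 0 = 0)
  (HdU_inf : filterlim dU (Rbar_locally p_infty) (locally 0))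
  (HdU_0 : filterlim dU (at_right 0) (Rbar_locally p_infty))
  (* h *)
  (Hh_C2 : C2_on_nonneg h dh d2h)
  (Hh_conv : strictly_convex_nonneg h)
  (Hh_incr : increasing_nonneg h)
  (Hh_nn : nonneg_valued h)
  (Hh0 : h 0 = 0)
  (Hdh0 : 0 < dh 0)
  (* constants *)
  (Hdel : 0 < del) (Hlam : del <= lam) :
  forall a b, 0 < a -> a < b ->
    G lam del U dU h dh dphi a < G lam del U dU h dh dphi b.
Proof.
  intros a b Ha Hab.
  destruct HU_C2 as (HU_der & HdU_der & _).
  destruct Hphi_C2 as (Hphi_der & Hdphi_der & _ & _ & Hdphi_at_0 & _).
  destruct Hh_C2 as (Hh_der & Hdh_der & _ & Hh_at_0 & Hdh_at_0 & _).
  assert (HdU_cont := derive_on_continuous dU d2U HdU_der).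
  assert (Hdphi_cont := derive_on_continuous dphi d2phi Hdphi_der).
  assert (Hdh_cont := derive_on_continuous dh d2h Hdh_der).
  (* [G] unfolds to [discounted_value] for this [Phi]. *)
  apply (discounted_value_incr lam del (fun y => U (inv_dU dU y) - h (inv_hphi dh dphi y)));
    [exact Hdel | exact Hlam | | | | exact Ha | exact Hab].
  - intros y Hy.
    apply (continuous_minus (fun z => U (inv_dU dU z)) (fun z => h (inv_hphi dh dphi z))).
    + eapply U_inv_dU_continuous; eauto.
    + eapply h_inv_hphi_continuous; eauto.
  - intros y y' Hy Hyy'.
    assert (U (inv_dU dU y') < U (inv_dU dU y)) by (eapply U_inv_dU_decr; eauto).
    assert (h (inv_hphi dh dphi y) <= h (inv_hphi dh dphi y'))
      by (eapply h_inv_hphi_nondecr; eauto; lra).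
    lra.
  - intros y0 Hy0; destruct (h_inv_hphi_linear_bound phi dphi h dh) as [K HK]; auto.
    exists (U 0 - h 0), (U (inv_dU dU y0) - h 0), K; intros y Hy.
    assert (U 0 < U (inv_dU dU y) <= U (inv_dU dU y0)) by (eapply U_inv_dU_bounds; eauto).
    assert (Hhy := HK y ltac:(lra)); lra.
Qed.
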